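(* Let $\epsilon$ be a sequence to which Algorithm A (described below) is applied and let $\epsilon'$ be the output. Then for every position $i$, $\epsilon'_i\neq\epsilon_i$ if and only if $i-2$ is an original occurrence of $p$, a transient occurrence of $p$, or an original occurrence of $q$.
   Context: The reduction of an integer word replaces each occurrence of its $k$-th smallest distinct value by $k-1$; a consecutive pattern $\underline{p_1p_2p_3p_4}$ occurs in a sequence at position $i$ if the reduction of its entries in positions $i,\dots,i+3$ equals $p_1p_2p_3p_4$. Let $p=\underline{0102}$ and $q=\underline{0112}$. Algorithm A, on input an integer sequence $\mathrm{seq}=\epsilon_1\cdots\epsilon_n$: let $E_p$, $E_q$ be the sets of positions of occurrences of $p$, resp. $q$, in the input sequence; set $\mathrm{last}:=$ null. For $i=1,2,\dots,n$ in order: let $N_p,N_q$ be the sets of positions of occurrences of $p$, resp. $q$, in the current sequence. If $i-2\in E_p$: set $\mathrm{last}:=\mathrm{seq}[i]$ and $\mathrm{seq}[i]:=\mathrm{seq}[i-1]$. Else if $i-2\in E_q$: set $\mathrm{last}:=\mathrm{seq}[i]$ and $\mathrm{seq}[i]:=\mathrm{seq}[i-2]$. Else if $i-2\in N_p$ or $i-2\in N_q$: swap the values of $\mathrm{seq}[i]$ and $\mathrm{last}$. Output $\mathrm{seq}$. With $\epsilon$ the input and $\epsilon'$ the output: position $i$ is an original occurrence of $p$ if $\epsilon_i=\epsilon_{i+2}$ and $\epsilon_i<\epsilon_{i+1}<\epsilon_{i+3}$; an original occurrence of $q$ if $\epsilon_i<\epsilon_{i+1}=\epsilon_{i+2}<\epsilon_{i+3}$;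 a transient occurrence of $p$ if it is not an original occurrence of $p$ but $\epsilon'_i=\epsilon_{i+2}$ and $\epsilon'_i<\epsilon_{i+1}<\epsilon_{i+3}$. *)

(* Sequences are [seq int], positions are 1-indexed. *)
From mathcomp Require Import all_boot all_order all_algebra.
Set Implicit Arguments. Unset Strict Implicit. Unset Printing Implicit Defensive.
Import Order.TTheory GRing.Theory Num.Theory.

Definition at_pos (s : seq int) (i : nat) : int := nth 0%R s i.-1.
Definition set_pos (s : seq int) (i : nat) (v : int) : seq int :=
  set_nth 0%R s i.-1 v.

(* reduction: each occurrence of the k-th smallest distinct value becomes k-1,
   i.e. x is replaced by the number of distinct values of w smaller than x *)
Definition reduction (w : seq int) : seq nat :=
  map (fun x => count (fun y => (y < x)%R) (undup w)) w.

Definition occurs (pat : seq nat) (s : seq int) (j : nat) : bool :=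
  [&& 1 <= j, j + 3 <= size s & reduction (take 4 (drop j.-1 s)) == pat].

Definition pat_p : seq nat := [:: 0; 1; 0; 2].
Definition pat_q : seq nat := [:: 0; 1; 1; 2].

(* one step (index i) of Algorithm A; e is the original input,
   the state is the current sequence together with the variable last
   (None = null). *)
Definition stepA (e : seq int) (st : seq int * option int) (i : nat)
  : seq int * option int :=
  let: (s, last) := st in
  if occurs pat_p e (i - 2) then
    (set_pos s i (at_pos s i.-1), Some (at_pos s i))
  else if occurs pat_q e (i - 2) then
    (set_pos s i (at_pos s (i - 2)), Some (at_pos s i))
  else if occurs pat_p s (i - 2) || occurs pat_q s (i - 2) then
    match last with
    | Some l => (set_pos s i l, Some (at_pos s i))
    | None => (s, None) (* unreachable *)
    end
  else (s, last).

Definition algA (e : seq int) : seq int :=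
  (foldl (stepA e) (e, None) (iota 1 (size e))).1.

Definition orig_occ_p (e : seq int) (i : nat) : Prop :=
  [/\ 1 <= i, i + 3 <= size e,
      at_pos e i = at_pos e (i + 2) &
      (at_pos e i < at_pos e (i + 1) < at_pos e (i + 3))%R].

Definition orig_occ_q (e : seq int) (i : nat) : Prop :=
  [/\ 1 <= i, i + 3 <= size e &
      (at_pos e i < at_pos e (i + 1))%R /\
      at_pos e (i + 1) = at_pos e (i + 2) /\
      (at_pos e (i + 2) < at_pos e (i + 3))%R].

Definition trans_occ_p (e e' : seq int) (i : nat) : Prop :=
  [/\ 1 <= i, i + 3 <= size e, ~ orig_occ_p e i,
      at_pos e' i = at_pos e (i + 2) &
      (at_pos e' i < at_pos e (i + 1) < at_pos e (i + 3))%R].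

(* Follow Algorithm A through an invariant on the first m processed positions:
   later positions are untouched; a processed position b+2 has been changed
   exactly when b is an original occurrence of p or q or a transient
   occurrence of p; every changed position k satisfies s_k < e_(k+1); and
   [last] holds the input value of the most recently changed position.
   The characterisation gives e_k < e_(k+1) and e_k <= e_(k-1) at every
   changed k, so no two adjacent positions are changed.  At step b+2 the
   branches of the algorithm then match the three kinds of occurrences: an
   occurrence of p or q at b in the current sequence that is not one in the
   input can only come from a change at b, the last change so far, with b+1
   unchanged; it is then a transient occurrence of p, and the swap writes e_b
   into position b+2. *)

From mathcomp Require Import all_boot all_order all_algebra.
From mathcomp Require Import zify.
Set Implicit Arguments. Unset Strict Implicit. Unset Printing Implicit Defensive.
Import Order.TTheory GRing.Theory Num.Theory.
Local Open Scope ring_scope.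

Definition value_rank (w : seq int) (x : int) : nat :=
  count (fun y => y < x) (undup w).

Lemma reductionE w : reduction w = map (value_rank w) w.
Proof. by []. Qed.

Lemma count_lt_ltn (l : seq int) (x y : int) : x < y -> x \in l ->
  (count (fun z => (z < x)%R) l < count (fun z => (z < y)%R) l)%N.
Proof.
move=> lt_xy; elim: l => [|z l IHl] //=; rewrite inE => /orP[/eqP <-|xl].
  rewrite ltxx lt_xy add1n ltnS; apply: sub_count => u /= ux.
  exact: lt_trans ux lt_xy.
have := IHl xl; case: (ltP z x) => [zx|xz] /=; first by rewrite (lt_trans zx lt_xy); lia.
by case: (z < y); lia.
Qed.

Lemma value_rank_mono w :
  {in w &, {mono value_rank w : x y / x < y >-> (x < y)%N}}.
Proof.
move=> x y xw _; case: (ltP x y) => [lt_xy|le_yx].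
  by apply: count_lt_ltn; rewrite ?mem_undup.
apply/negbTE; rewrite -leqNgt; apply: sub_count => z /= zy.
exact: lt_le_trans zy le_yx.
Qed.

Lemma value_rank_inj w : {in w &, injective (value_rank w)}.
Proof.
move=> x y xw yw exy; case: (ltgtP x y) => // [lt_xy|lt_yx].
  by move: lt_xy; rewrite -(value_rank_mono xw yw) exy ltnn.
by move: lt_yx; rewrite -(value_rank_mono yw xw) exy ltnn.
Qed.

Lemma mem_seq4 (T : eqType) (a b c d : T) :
  [/\ a \in [:: a; b; c; d], b \in [:: a; b; c; d],
      c \in [:: a; b; c; d] & d \in [:: a; b; c; d]].
Proof. by rewrite !inE !eqxx ?orbT. Qed.

Lemma reduction_pat_p (a b c d : int) :
  (reduction [:: a; b; c; d] == pat_p) = [&& a == c, a < b & b < d].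
Proof.
apply/idP/idP.
  have [wa wb wc wd] := mem_seq4 a b c d.
  rewrite reductionE /pat_p => /eqP [ra rb rc rd].
  rewrite (value_rank_inj wa wc) ?ra ?rc // eqxx /=.
  by rewrite -(value_rank_mono wc wb) -(value_rank_mono wb wd) rc rb rd.
case/and3P=> /eqP <- ab bd; have ad := lt_trans ab bd.
rewrite /reduction /pat_p /= !inE eqxx ?orbT.
rewrite ?(lt_eqF ab, gt_eqF ab, lt_eqF bd, gt_eqF bd, lt_eqF ad, gt_eqF ad) /=.
by rewrite ?ltxx ?ab ?ad ?bd ?(lt_gtF ab) ?(lt_gtF ad) ?(lt_gtF bd).
Qed.

Lemma reduction_pat_q (a b c d : int) :
  (reduction [:: a; b; c; d] == pat_q) = [&& a < b, b == c & c < d].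
Proof.
apply/idP/idP.
  have [wa wb wc wd] := mem_seq4 a b c d.
  rewrite reductionE /pat_q => /eqP [ra rb rc rd].
  rewrite (value_rank_inj wb wc) ?rb ?rc // eqxx /=.
  by rewrite -(value_rank_mono wa wc) -(value_rank_mono wc wd) ra rc rd.
case/and3P=> ab /eqP <- bd; have ad := lt_trans ab bd.
rewrite /reduction /pat_q /= !inE eqxx ?orbT.
rewrite ?(lt_eqF ab, gt_eqF ab, lt_eqF bd, gt_eqF bd, lt_eqF ad, gt_eqF ad) /=.
by rewrite ?ltxx ?ab ?ad ?bd ?(lt_gtF ab) ?(lt_gtF ad) ?(lt_gtF bd).
Qed.

Definition p_at (s : seq int) (b : nat) : Prop :=
  [/\ (0 < b)%N, (b.+3 <= size s)%N, at_pos s b = at_pos s b.+2,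
      at_pos s b < at_pos s b.+1 & at_pos s b.+1 < at_pos s b.+3].

Definition q_at (s : seq int) (b : nat) : Prop :=
  [/\ (0 < b)%N, (b.+3 <= size s)%N, at_pos s b < at_pos s b.+1,
      at_pos s b.+1 = at_pos s b.+2 & at_pos s b.+2 < at_pos s b.+3].

Definition transient_p_at (e s : seq int) (b : nat) : Prop :=
  [/\ (0 < b)%N, (b.+3 <= size e)%N, ~ p_at e b, at_pos s b = at_pos e b.+2 &
      at_pos s b < at_pos e b.+1 /\ at_pos e b.+1 < at_pos e b.+3].

Definition trigger (e s : seq int) (b : nat) : Prop :=
  p_at e b \/ transient_p_at e s b \/ q_at e b.

Lemma take4_drop (s : seq int) b : (b.+4 <= size s)%N ->
  take 4 (drop b s) = [:: nth 0 s b; nth 0 s b.+1; nth 0 s b.+2; nth 0 s b.+3].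
Proof.
move=> lt_bs.
rewrite (drop_nth (0 : int)); last lia.
rewrite (drop_nth (0 : int) (n := b.+1)); last lia.
rewrite (drop_nth (0 : int) (n := b.+2)); last lia.
by rewrite (drop_nth (0 : int) (n := b.+3)) /= ?take0.
Qed.

Lemma occurs_pP s b : reflect (p_at s b) (occurs pat_p s b).
Proof.
rewrite /occurs /p_at; case: b => [|b]; first by constructor => -[].
rewrite addn3 /=; case: (ltnP b.+3 (size s)) => lt_bs /=; last first.
  by constructor => -[_]; lia.
rewrite take4_drop // reduction_pat_p.
by apply: (iffP and3P) => [[/eqP]|[_ _ /eqP]].
Qed.

Lemma occurs_qP s b : reflect (q_at s b) (occurs pat_q s b).
Proof.
rewrite /occurs /q_at; case: b => [|b]; first by constructor => -[].
rewrite addn3 /=; case: (ltnP b.+3 (size s)) => lt_bs /=; last first.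
  by constructor => -[_]; lia.
rewrite take4_drop // reduction_pat_q.
by apply: (iffP and3P) => [[? /eqP]|[_ _ ? /eqP]].
Qed.

Lemma orig_occ_pE e b : orig_occ_p e b <-> p_at e b.
Proof.
rewrite /orig_occ_p /p_at !addn3 !addn2 !addn1.
by split=> [[? ? ? /andP[]]|[]] //; split=> //; apply/andP.
Qed.

Lemma orig_occ_qE e b : orig_occ_q e b <-> q_at e b.
Proof. by rewrite /orig_occ_q /q_at !addn3 !addn2 !addn1; split=> [[? ? [? []]]|[]]. Qed.

Lemma trans_occ_pE e s b : trans_occ_p e s b <-> transient_p_at e s b.
Proof.
rewrite /trans_occ_p /transient_p_at !addn3 !addn2 !addn1.
by split=> [[? ? /orig_occ_pE ? ? /andP]|[? ? /orig_occ_pE ? ? /andP]].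
Qed.

Lemma trigger0 e s : ~ trigger e s 0.
Proof. by case=> [[]|[[]|[]]]. Qed.

Lemma at_pos_set (s : seq int) i v k : (1 < i)%N ->
  at_pos (set_pos s i v) k = if k == i then v else at_pos s k.
Proof.
rewrite /at_pos /set_pos nth_set_nth /=; case: i => // i lt1i.
by case: k => [|k] //=; case: i lt1i.
Qed.

Lemma trigger_set e s i v b : (1 < i)%N -> b != i ->
  trigger e (set_pos s i v) b <-> trigger e s b.
Proof.
by move=> lt1i neq_bi; rewrite /trigger /transient_p_at at_pos_set // (negbTE neq_bi).
Qed.

Record processed (e : seq int) (m : nat) (s : seq int) (last : option int) : Prop := {
  size_processed : size s = size e;
  unprocessed_eq : forall k, (m < k)%N -> at_pos s k = at_pos e k;
  (* also covers the junk position 0: [at_pos s 0] is [at_pos s 1] *)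
  head_eq : at_pos s 1 = at_pos e 1;
  changedP : forall b, (b.+2 <= m)%N ->
    at_pos s b.+2 <> at_pos e b.+2 <-> trigger e s b;
  changed_lt_next : forall k, (k <= m)%N ->
    at_pos s k <> at_pos e k -> at_pos s k < at_pos e k.+1;
  last_changed : forall k, (k <= m)%N -> at_pos s k <> at_pos e k ->
    (forall k', (k < k' <= m)%N -> at_pos s k' = at_pos e k') ->
    last = Some (at_pos e k) }.

Lemma processed0 e : processed e 0 e None.
Proof. by split. Qed.

Section Processed.

Variables (e : seq int) (m : nat) (s : seq int) (last : option int).
Hypothesis proc : processed e m s last.

Lemma changed_orig_lt_next k : (k <= m)%N ->
  at_pos s k <> at_pos e k -> at_pos e k < at_pos e k.+1.
Proof.
case: k => [|[|b]] le_km changed; try by case: changed; apply: (head_eq proc).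
by case/(changedP proc le_km): changed => [[]|[[]|[]]] *; lia.
Qed.

Lemma changed_orig_le_prev b : (b.+2 <= m)%N ->
  at_pos s b.+2 <> at_pos e b.+2 -> at_pos e b.+2 <= at_pos e b.+1.
Proof. by move=> le_bm /(changedP proc le_bm) [[]|[[]|[]]] *; lia. Qed.

Lemma changed_isolated k : (k.+1 <= m)%N ->
  at_pos s k.+1 <> at_pos e k.+1 -> at_pos s k = at_pos e k.
Proof.
case: k => [|b] le_km changed; first by case: changed; apply: (head_eq proc).
case: (eqVneq (at_pos s b.+1) (at_pos e b.+1)) => // /eqP changed_b.
have := changed_orig_le_prev le_km changed.
have := changed_orig_lt_next (ltnW le_km) changed_b; lia.
Qed.

End Processed.

Lemma processed_skip e m s last : processed e m s last -> (m < size e)%N ->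
  ~ trigger e s m.-1 -> processed e m.+1 s last.
Proof.
move=> proc lt_m no_trigger.
have fresh : at_pos s m.+1 = at_pos e m.+1 by apply: (unprocessed_eq proc).
split=> [||| b le_b | k le_k changed | k le_k changed later].
- exact: size_processed proc.
- by move=> k lt_k; apply: (unprocessed_eq proc); lia.
- exact: head_eq proc.
- have [eq_b|le_bm] : b.+2 = m.+1 \/ (b.+2 <= m)%N by lia.
    rewrite eq_b fresh (_ : b = m.-1); last by lia.
    by split=> [|/no_trigger].
  exact: changedP proc b le_bm.
- have [eq_k|le_km] : k = m.+1 \/ (k <= m)%N by lia.
    by rewrite eq_k in changed.
  exact: changed_lt_next proc k le_km changed.
- have [eq_k|le_km] : k = m.+1 \/ (k <= m)%N by lia.
    by rewrite eq_k in changed.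
  by apply: (last_changed proc le_km changed) => k' le_k'; apply: later; lia.
Qed.

Section Step.

Variables (e : seq int) (b : nat) (s : seq int) (last : option int).
Hypotheses (proc : processed e b.+1 s last) (size_b : (b.+2 <= size e)%N).

Lemma processed_write v : v <> at_pos e b.+2 -> v < at_pos e b.+3 -> trigger e s b ->
  processed e b.+2 (set_pos s b.+2 v) (Some (at_pos s b.+2)).
Proof.
move=> changed v_lt trig.
have setE k : at_pos (set_pos s b.+2 v) k = if k == b.+2 then v else at_pos s k.
  exact: at_pos_set.
have fresh : at_pos s b.+2 = at_pos e b.+2 by apply: (unprocessed_eq proc).
split=> [| k lt_k || c le_c | k le_k | k le_k changed_k later].
- by rewrite size_set_nth (size_processed proc); lia.
- by rewrite setE ifN; [apply: (unprocessed_eq proc); lia | apply/eqP; lia].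
- by rewrite setE (head_eq proc).
- rewrite trigger_set //; last by apply/eqP; lia.
  have [->|neq_cb] := eqVneq c b; first by rewrite setE eqxx.
  by rewrite setE ifN; [apply: (changedP proc); lia | apply/eqP; lia].
- rewrite setE; case: eqP => [-> _ //|neq_kb]; apply: (changed_lt_next proc); lia.
- have [->|neq_kb] := eqVneq k b.+2; first by rewrite fresh.
  by case: changed; have := later b.+2; rewrite setE eqxx; apply; lia.
Qed.

Lemma step_p : p_at e b ->
  processed e b.+2 (set_pos s b.+2 (at_pos s b.+1)) (Some (at_pos s b.+2)).
Proof.
move=> p_e; have [_ _ eq_02 lt_01 lt_13] := p_e.
have next_eq : at_pos s b.+1 = at_pos e b.+1.
  case: (eqVneq (at_pos s b.+1) (at_pos e b.+1)) => // /eqP changed.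
  by have := changed_orig_lt_next proc (leqnn _) changed; lia.
by rewrite next_eq; apply: processed_write; [lia | lia | left].
Qed.

Lemma step_q : q_at e b ->
  processed e b.+2 (set_pos s b.+2 (at_pos s b)) (Some (at_pos s b.+2)).
Proof.
move=> q_e; have [_ _ lt_01 eq_12 lt_23] := q_e.
have lt_v : at_pos s b < at_pos e b.+2.
  case: (eqVneq (at_pos s b) (at_pos e b)) => [->|/eqP changed]; first lia.
  by have := changed_lt_next proc (leqnSn _) changed; lia.
by apply: processed_write; [lia | lia | right; right].
Qed.

Lemma current_occ_transient : ~ p_at e b -> ~ q_at e b -> p_at s b \/ q_at s b ->
  [/\ at_pos s b <> at_pos e b, at_pos s b.+1 = at_pos e b.+1 & transient_p_at e s b].
Proof.
move=> not_p_e not_q_e occ_s.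
have size_s := size_processed proc.
have fresh2 : at_pos s b.+2 = at_pos e b.+2 by apply: (unprocessed_eq proc).
have fresh3 : at_pos s b.+3 = at_pos e b.+3 by apply: (unprocessed_eq proc).
have next_eq : at_pos s b.+1 = at_pos e b.+1.
  case: (eqVneq (at_pos s b.+1) (at_pos e b.+1)) => // /eqP changed.
  have := changed_lt_next proc (leqnn _) changed.
  by case: occ_s => -[] *; lia.
have changed : at_pos s b <> at_pos e b.
  by move=> eq_b; case: occ_s => -[] *; [apply: not_p_e | apply: not_q_e]; split; lia.
have := changed_orig_lt_next proc (leqnSn _) changed.
by split=> //; case: occ_s => -[] *; [split=> // | case: not_q_e; split]; lia.
Qed.

Lemma step_transient : ~ p_at e b -> ~ q_at e b -> p_at s b \/ q_at s b ->
  last = Some (at_pos e b) /\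
  processed e b.+2 (set_pos s b.+2 (at_pos e b)) (Some (at_pos s b.+2)).
Proof.
move=> not_p_e not_q_e occ_s.
have [changed next_eq trans] := current_occ_transient not_p_e not_q_e occ_s.
split.
  apply: (last_changed proc (leqnSn _) changed) => k' /andP[lt_bk le_k'].
  by have -> : k' = b.+1 by lia.
have [_ _ _ eq_b2 [lt_01 lt_13]] := trans.
have := changed_orig_lt_next proc (leqnSn _) changed.
by move=> lt_orig; apply: processed_write; [lia | lia | right; left].
Qed.

Lemma idle_no_trigger : ~ p_at e b -> ~ q_at e b -> ~ (p_at s b \/ q_at s b) ->
  ~ trigger e s b.
Proof.
move=> not_p_e not_q_e not_occ_s [//|[trans|//]].
have [pos size_b3 _ eq_b2 [lt_01 lt_13]] := trans.
have size_s := size_processed proc.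
have fresh2 : at_pos s b.+2 = at_pos e b.+2 by apply: (unprocessed_eq proc).
have fresh3 : at_pos s b.+3 = at_pos e b.+3 by apply: (unprocessed_eq proc).
case: (eqVneq (at_pos s b.+1) (at_pos e b.+1)) => [next_eq|/eqP changed].
  by apply: not_occ_s; left; split; lia.
have := changed_isolated proc (leqnn _) changed.
by move=> eq_b; apply: not_p_e; split; lia.
Qed.

End Step.

Lemma processed_step e m s last : processed e m s last -> (m < size e)%N ->
  processed e m.+1 (stepA e (s, last) m.+1).1 (stepA e (s, last) m.+1).2.
Proof.
case: m => [|b] proc lt_m; first exact: processed_skip proc lt_m (@trigger0 e s).
rewrite /stepA subn2 /=.
case: (occurs_pP e b) => [p_e|not_p_e]; first exact: step_p proc lt_m p_e.
case: (occurs_qP e b) => [q_e|not_q_e]; first exact: step_q proc lt_m q_e.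
case: (orPP (occurs_pP s b) (occurs_qP s b)) => [occ_s|not_occ_s].
  by have [-> proc'] := step_transient proc lt_m not_p_e not_q_e occ_s.
exact: processed_skip proc lt_m (idle_no_trigger proc lt_m not_p_e not_q_e not_occ_s).
Qed.

Definition stateA (e : seq int) (m : nat) : seq int * option int :=
  foldl (stepA e) (e, None) (iota 1 m).

Lemma processed_stateA e m : (m <= size e)%N ->
  processed e m (stateA e m).1 (stateA e m).2.
Proof.
elim: m => [|m IHm] le_m; first exact: processed0.
rewrite /stateA -addn1 iotaD foldl_cat /= add1n -/(stateA e m).
move: (IHm (ltnW le_m)); case: (stateA e m) => s last /= proc.
by rewrite addn1; apply: processed_step.
Qed.

Local Close Scope ring_scope.

Theorem lemma6 (e : seq int) (i : nat) :
  1 <= i <= size e ->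
  (at_pos (algA e) i <> at_pos e i <->
   orig_occ_p e (i - 2) \/ trans_occ_p e (algA e) (i - 2) \/ orig_occ_q e (i - 2)).
Proof.
case/andP=> lt0i le_i; have proc := processed_stateA (leqnn (size e)).
rewrite /algA -/(stateA e (size e)).
case: i lt0i le_i => [|[|b]] // _ le_b.
  by rewrite (head_eq proc); split=> // -[[]|[[]|[]]].
rewrite subn2 /= orig_occ_pE orig_occ_qE trans_occ_pE.
exact: changedP proc b le_b.
Qed.
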